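(* Let a pairwise majority rule be $\lambda$-bounded, let $Z^*$ be a point of the metric space minimizing $SC$ over the whole space, and let $\delta_I=SC(P)/\min_{Z\in\mathcal C}SC(Z)$ be the distortion of the selected candidate $P$, assumed $>1$. (i) If $|\mathcal C|=2$ and $P$ wins under the rule, then $SC(P)/SC(Z^* )\le\frac{\lambda\delta_I}{\delta_I-1}$. (ii) If $\mathcal C$ is arbitrary and $P$ is in the uncovered set of the pairwise majority graph formed by the rule, then $SC(P)/SC(Z^* )\le\frac{2\lambda\delta_I}{\delta_I-1}$.
   Context: Voters $N$ and candidates $\mathcal C$ are points of an arbitrary metric space $(X,d)$; $SC(Y)=\sum_{i\in N}d(i,Y)$ for any $Y\in X$. A pairwise majority rule decides, for each pair of candidates, which one beats the other. It is $\lambda$-bounded if whenever $P$ beats $Q$ we have $SC(P)\le SC(Q)+\lambda\,SC(Z)$ for every point $Z\in X$. A candidate $P$ is in the uncovered set of the resulting graph if for every other candidate $Z$, either $P$ beats $Z$, or there is $Y$ with $P$ beating $Y$ and $Y$ beating $Z$. *)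

From Stdlib Require Import Reals List.
Import ListNotations.
Open Scope R_scope.

Definition is_metric {X : Type} (d : X -> X -> R) : Prop :=
  (forall x y, 0 <= d x y) /\
  (forall x y, d x y = 0 <-> x = y) /\
  (forall x y, d x y = d y x) /\
  (forall x y z, d x z <= d x y + d y z).

(* Social cost SC(Y) = sum over voters i of d(i,Y); voters form a finite list
   (a multiset: several voters may sit at the same point). *)
Definition SC {X : Type} (d : X -> X -> R) (N : list X) (Y : X) : R :=
  fold_right (fun i acc => d i Y + acc) 0 N.

Definition minSC {X : Type} (d : X -> X -> R) (N : list X) (C : list X) : R :=
  match C with
  | [] => 0
  | c :: cs => fold_right (fun z acc => Rmin (SC d N z) acc) (SC d N c) cs
  end.

Definition pairwise_rule {X : Type} (C : list X) (beats : X -> X -> Prop) : Prop :=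
  forall P Q, In P C -> In Q C -> P <> Q ->
    (beats P Q \/ beats Q P) /\ ~ (beats P Q /\ beats Q P).

Definition lambda_bounded {X : Type} (d : X -> X -> R) (N C : list X)
  (beats : X -> X -> Prop) (lam : R) : Prop :=
  forall P Q, In P C -> In Q C -> beats P Q ->
    forall Z : X, SC d N P <= SC d N Q + lam * SC d N Z.

Definition wins {X : Type} (C : list X) (beats : X -> X -> Prop) (P : X) : Prop :=
  In P C /\ forall Q, In Q C -> Q <> P -> beats P Q.

Definition uncovered {X : Type} (C : list X) (beats : X -> X -> Prop) (P : X) : Prop :=
  In P C /\ forall Z, In Z C -> Z <> P ->
    beats P Z \/ exists Y, In Y C /\ beats P Y /\ beats Y Z.

(* If P beats the best candidate W, directly or through some Y, then
   lambda-boundedness gives SC(P) - SC(W) <= lambda SC(Z) (resp. 2 lambda SC(Z)) for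
   every point Z.  With SC(W) = SC(P) / delta this rearranges to the claimed ratio;
   in particular Z need not minimize SC, and only the nonnegativity of d is used. *)
From Stdlib Require Import Reals List Lra.
Open Scope R_scope.

Lemma SC_ge0 {X : Type} (d : X -> X -> R) (N : list X) (Y : X) :
  (forall x y, 0 <= d x y) -> 0 <= SC d N Y.
Proof.
  intros d_ge0; induction N as [|i N IH]; simpl; [lra|].
  pose proof (d_ge0 i Y); lra.
Qed.

Lemma minSC_attained {X : Type} (d : X -> X -> R) (N C : list X) :
  C <> nil -> exists W, In W C /\ minSC d N C = SC d N W.
Proof.
  destruct C as [|c cs]; [congruence|]; intros _; simpl.
  induction cs as [|z cs [W [inW minE]]]; simpl; [now exists c; auto|].
  rewrite minE.
  unfold Rmin; destruct (Rle_dec (SC d N z) (SC d N W)).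
  - now exists z; simpl; auto.
  - exists W; simpl in *; tauto.
Qed.

Lemma lt_of_ratio_gt1 (S m : R) : 0 < m -> 1 < S / m -> m < S.
Proof.
  intros m_gt0 ratio_gt1.
  apply (Rmult_lt_compat_r m) in ratio_gt1; [|exact m_gt0].
  now field_simplify in ratio_gt1; lra.
Qed.

Lemma ratio_le_distortion_bound (k S m T : R) :
  0 < m -> 1 < S / m -> 0 <= T -> S - m <= k * T ->
  S / T <= k * (S / m) / (S / m - 1).
Proof.
  intros m_gt0 ratio_gt1 T_ge0 gap_le.
  pose proof (lt_of_ratio_gt1 S m m_gt0 ratio_gt1) as m_lt_S.
  assert (T_gt0 : 0 < T) by (destruct T_ge0 as [|<-]; lra).
  replace (k * (S / m) / (S / m - 1)) with (S / (S - m) * k) by (field; lra).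
  replace (S / T) with (S / (S - m) * ((S - m) / T)) by (field; lra).
  apply Rmult_le_compat_l.
  - apply Rlt_le, Rdiv_lt_0_compat; lra.
  - apply (Rmult_le_reg_r T); [exact T_gt0|].
    unfold Rdiv; rewrite Rmult_assoc, Rinv_l by lra; lra.
Qed.

Section MajorityGap.

Variables (X : Type) (d : X -> X -> R) (N C : list X).
Variables (beats : X -> X -> Prop) (lam : R).
Hypothesis bounded : lambda_bounded d N C beats lam.

Lemma wins_SC_gap (P W Z : X) :
  wins C beats P -> In W C -> W <> P -> SC d N P - SC d N W <= lam * SC d N Z.
Proof.
  intros [inP P_beats] inW W_neq_P.
  pose proof (bounded P W inP inW (P_beats W inW W_neq_P) Z); lra.
Qed.

Lemma uncovered_SC_gap (P W Z : X) :
  uncovered C beats P -> In W C -> W <> P -> SC d N W < SC d N P ->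
  SC d N P - SC d N W <= 2 * lam * SC d N Z.
Proof.
  intros [inP P_cover] inW W_neq_P W_better.
  destruct (P_cover W inW W_neq_P) as [P_W | [Y [inY [P_Y Y_W]]]].
  - (* the gap is positive, so lam * SC(Z) >= 0 and doubling it is harmless *)
    pose proof (bounded P W inP inW P_W Z); lra.
  - pose proof (bounded P Y inP inY P_Y Z).
    pose proof (bounded Y W inY inW Y_W Z); lra.
Qed.

End MajorityGap.

Theorem mainTheorem13 :
  forall (X : Type) (d : X -> X -> R) (N C : list X)
    (beats : X -> X -> Prop) (lam : R) (Zstar : X),
    is_metric d ->
    C <> nil -> NoDup C ->
    pairwise_rule C beats ->
    lambda_bounded d N C beats lam ->
    (forall Z : X, SC d N Zstar <= SC d N Z) ->
    0 < minSC d N C ->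
    (* (i) two candidates, P the winner *)
    (forall P : X,
        length C = 2%nat ->
        wins C beats P ->
        let deltaI := SC d N P / minSC d N C in
        1 < deltaI ->
        SC d N P / SC d N Zstar <= lam * deltaI / (deltaI - 1))
    /\
    (* (ii) arbitrary candidates, P in the uncovered set *)
    (forall P : X,
        uncovered C beats P ->
        let deltaI := SC d N P / minSC d N C in
        1 < deltaI ->
        SC d N P / SC d N Zstar <= 2 * lam * deltaI / (deltaI - 1)).
Proof.
  intros X d N C beats lam Zstar [d_ge0 _] C_nonempty _ _ bounded _ min_gt0.
  destruct (minSC_attained d N C C_nonempty) as [W [inW minE]].
  pose proof (SC_ge0 d N Zstar d_ge0) as Zstar_ge0.
  assert (best_neq : forall P, 1 < SC d N P / minSC d N C ->
                      SC d N W < SC d N P /\ W <> P).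
  { intros P ratio_gt1.
    pose proof (lt_of_ratio_gt1 _ _ min_gt0 ratio_gt1).
    split; [lra | intros ->; lra]. }
  split.
  - intros P _ P_wins deltaI ratio_gt1.
    destruct (best_neq P ratio_gt1) as [_ W_neq_P].
    apply ratio_le_distortion_bound; [exact min_gt0 | exact ratio_gt1 | exact Zstar_ge0 |].
    rewrite minE; exact (wins_SC_gap X d N C beats lam bounded P W Zstar P_wins inW W_neq_P).
  - intros P P_unc deltaI ratio_gt1.
    destruct (best_neq P ratio_gt1) as [W_better W_neq_P].
    apply ratio_le_distortion_bound; [exact min_gt0 | exact ratio_gt1 | exact Zstar_ge0 |].
    rewrite minE.
    exact (uncovered_SC_gap X d N C beats lam bounded P W Zstar P_unc inW W_neq_P W_better).
Qed.
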